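(* For every $G^*\in\mathcal{G}^*_{d,c}(n)$, if $\sigma$ is a uniformly random permutation in $S_n$ then \[ \mathbb{E}\left[\lvert\phi(G^{*}_\sigma)\rvert\right] \geq T_c,\qquad T_c=c\cdot\frac{dn}{2}\cdot\frac{d-1}{d+1}.\]
   Context: Fix $0<c<1$, $n,d$ with $dn$ even, and $T_{\max}=\binom d2\frac n3$. $\mathcal{G}^*_{d,c}(n)$ is the set of $d$-regular graphs on nodes $\{1,\dots,n\}$ with at least $c\cdot T_{\max}$ triangles, where at each node the $d$ incident edges carry distinct labels $1,\dots,d$. Configuration ordering: for edges $e=(i_1j_1)$, $f=(i_2j_2)$ with $i_1<j_1$, $i_2<j_2$, $e\prec f$ if $i_1<i_2$, or $i_1=i_2$ and the label of $e$ at $i_1$ is smaller than that of $f$. With $e_1\prec\dots\prec e_{nd/2}$ the edges and $G^*[k]$ the subgraph on $e_1,\dots,e_k$, $\phi(G^* )\in\{0,1\}^{nd/2}$ has $\phi(G^* )(k)=1$ iff $e_k$ lies in a triangle of $G^*[k]$; $\lvert x\rvert=\sum_j x(j)$. $G^*_\sigma$ denotes $G^*$ with node labels permuted by $\sigma\in S_n$ (edge labels kept). *)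

From HB Require Import structures.
From mathcomp Require Import all_boot all_order all_fingroup all_algebra.
Set Implicit Arguments. Unset Strict Implicit. Unset Printing Implicit Defensive.
Import Order.TTheory GRing.Theory Num.Theory.

(* A graph on nodes 'I_n whose incident edges at each node carry the labels
   0..d-1 (the paper's 1..d shifted by one) is given by its "port" map:
   nbr u k = the neighbour of u reached through the edge labelled k at u. *)
Definition port_graph (n d : nat) := 'I_n -> 'I_d -> 'I_n.

Section Defs.
Variables (n d : nat).
Implicit Type G : port_graph n d.

Definition adj G (u v : 'I_n) : bool := [exists k, G u k == v].

(* simple graph, every node has exactly d incident edges, with distinct labels *)
Definition labeled_regular G : Prop :=
  [/\ forall u, injective (G u),
      forall u k, G u k != u &
      forall u v, adj G u v = adj G v u].

Definition num_triangles G : nat :=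
  #|[set t : {set 'I_n} | (#|t| == 3) &&
      [forall u in t, forall v in t, (u != v) ==> adj G u v]]|.

Definition lab G (u v : 'I_n) : nat :=
  if [pick k | G u k == v] is Some k then nat_of_ord k else 0.

Definition edges G : seq ('I_n * 'I_n) :=
  [seq p : 'I_n * 'I_n <- [seq (i, j) | i : 'I_n <- enum 'I_n, j : 'I_n <- enum 'I_n] | (p.1 < p.2) && adj G p.1 p.2].

Definition conf_le G (e f : 'I_n * 'I_n) : bool :=
  (e.1 < f.1) || ((e.1 == f.1) && (lab G e.1 e.2 <= lab G f.1 f.2)).

Definition sorted_edges G : seq ('I_n * 'I_n) := sort (conf_le G) (edges G).

Definition in_sub (H : seq ('I_n * 'I_n)) (a b : 'I_n) : bool :=
  ((a, b) \in H) || ((b, a) \in H).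

Definition in_triangle (H : seq ('I_n * 'I_n)) (e : 'I_n * 'I_n) : bool :=
  in_sub H e.1 e.2 &&
  [exists w, (w != e.1) && (w != e.2) && in_sub H e.1 w && in_sub H e.2 w].

(* phi(G)(k) for k = 1..nd/2, stored at positions 0..nd/2-1 *)
Definition phi G : seq bool :=
  let s := sorted_edges G in
  mkseq (fun k => if onth s k is Some e then in_triangle (take k.+1 s) e else false)
        (size s).

Definition abs_phi G : nat := count id (phi G).

(* G_sigma: node labels permuted by sigma, edge labels kept *)
Definition perm_graph G (s : 'S_n) : port_graph n d :=
  fun v k => s (G ((s^-1)%g v) k).
End Defs.

From HB Require Import structures.
From mathcomp Require Import all_boot all_order all_fingroup all_algebra.
From mathcomp Require Import reals ring.
Import Order.TTheory GRing.Theory Num.Theory.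
Set Implicit Arguments. Unset Strict Implicit. Unset Printing Implicit Defensive.

(* In the configuration order the edges are sorted by their smaller endpoint,
   so the edge {a, b} with a < b closes a triangle of the graph built so far
   exactly when a and b have a common neighbour w < a.  After relabelling by
   a uniform random permutation s, an edge {x, y} with set C of common
   neighbours therefore contributes (in exactly one orientation) iff the
   s-smallest vertex of {x, y} u C lies in C, which happens with probability
   |C| / (|C| + 2) >= |C| / (d + 1) because |C| <= d - 1.  Summing |C(x, y)|
   over ordered edges counts every triangle six times, so
   E |phi(G_s)| >= 3 T / (d + 1) >= c (d n / 2) (d - 1) / (d + 1). *)

Lemma sum_mem_card (T : finType) (A : {pred T}) : \sum_(i : T) (i \in A : nat) = #|A|.
Proof. by rewrite -sum1_card [RHS]big_mkcond; apply: eq_bigr => i _; case: (i \in A). Qed.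

Lemma count_onth (T : Type) (p : pred T) (l : seq T) :
  count (fun k => if onth l k is Some e then p e else false) (iota 0 (size l)) = count p l.
Proof. by elim: l => //= x l IHl; rewrite -(addn0 1) iotaDl count_map -IHl. Qed.

Definition low_apex n d (G : port_graph n d) (a b : 'I_n) : bool :=
  [exists w : 'I_n, (w < a) && adj G w a && adj G w b].

Section ConfigurationOrder.
Variables (n d : nat) (G : port_graph n d).
Hypothesis adjC : forall u v, adj G u v = adj G v u.

Local Notation es := (sorted_edges G).

Lemma conf_le_total : total (conf_le G).
Proof.
move=> e f; rewrite /conf_le.
case: (ltngtP e.1 f.1) => [||/val_inj ->]; rewrite ?orbT //.
by rewrite eqxx leq_total.
Qed.

Lemma conf_le_trans : transitive (conf_le G).
Proof.
move=> f e g; rewrite /conf_le.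
move=> /orP[lt_ef|/andP[/eqP-> le_ef]] /orP[lt_fg|/andP[/eqP<- le_fg]].
- by rewrite (ltn_trans lt_ef lt_fg).
- by rewrite lt_ef.
- by rewrite lt_fg.
- by rewrite eqxx (leq_trans le_ef le_fg) orbT.
Qed.

Lemma conf_le_refl : reflexive (conf_le G).
Proof. by move=> e; rewrite /conf_le eqxx leqnn orbT. Qed.

Lemma mem_sorted_edges f : (f \in es) = (f.1 < f.2) && adj G f.1 f.2.
Proof.
rewrite mem_sort mem_filter; case: f => a b /=.
by rewrite (allpairs_f pair) ?mem_enum ?andbT.
Qed.

Lemma conf_le_take x0 k f : k < size es ->
  f \in take k.+1 es -> conf_le G f (nth x0 es k).
Proof.
move=> ltk f_take; have f_es := mem_take f_take.
rewrite -(nth_index x0 f_es).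
apply: (sorted_leq_nth conf_le_trans conf_le_refl); rewrite ?inE ?index_mem //.
  exact: sort_sorted conf_le_total _.
by rewrite -ltnS index_ltn.
Qed.

Lemma mem_take_lt_fst x0 k f : k < size es -> f \in es ->
  f.1 < (nth x0 es k).1 -> f \in take k.+1 es.
Proof.
move=> ltk f_es lt_f; rewrite in_take // ltnS leqNgt; apply/negP => lt_kf.
have lt_fi : index f es < size es by rewrite index_mem.
have := sorted_leq_nth conf_le_trans conf_le_refl x0 (sort_sorted conf_le_total _)
  k (index f es) ltk lt_fi (ltnW lt_kf).
rewrite nth_index // /conf_le => /orP[/(ltn_trans lt_f)|/andP[/eqP eq_f _]].
  by rewrite ltnn.
by move: lt_f; rewrite eq_f ltnn.
Qed.

Lemma in_sub_take_adj m u v : in_sub (take m es) u v -> adj G u v.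
Proof.
by case/orP=> /mem_take; rewrite mem_sorted_edges => /andP[_ //]; rewrite adjC.
Qed.

Lemma in_triangle_sorted_edges k e : onth es k = Some e ->
  in_triangle (take k.+1 es) e = low_apex G e.1 e.2.
Proof.
move=> es_k; have ltk : k < size es by rewrite -onthTE es_k.
have nth_k : nth e es k = e by apply: onth_nth.
have e_es : e \in es by rewrite -nth_k mem_nth.
have /andP[lt_e _] : (e.1 < e.2) && adj G e.1 e.2 by rewrite -mem_sorted_edges.
have take_lt f : f \in es -> f.1 < e.1 -> f \in take k.+1 es.
  by move=> f_es; rewrite -nth_k; apply: mem_take_lt_fst.
apply/idP/idP.
- case/andP=> _ /existsP[w /andP[/andP[/andP[ne_w1 _] e1w] e2w]].
  have lt_w : w < e.1.
    case/orP: e2w => /[dup] /(conf_le_take e ltk); rewrite nth_k /conf_le /=.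
      case/orP=> [/(ltn_trans lt_e)|/andP[/eqP e21 _]]; first by rewrite ltnn.
      by rewrite e21 ltnn in lt_e.
    by case/orP=> [//|/andP[/eqP w_e1 _]]; rewrite w_e1 eqxx in ne_w1.
  apply/existsP; exists w; rewrite lt_w.
  by rewrite adjC (in_sub_take_adj e1w) adjC (in_sub_take_adj e2w).
- case/existsP=> w /andP[/andP[lt_w w_e1] w_e2].
  have lt_w2 : w < e.2 := ltn_trans lt_w lt_e.
  apply/andP; split.
    by rewrite /in_sub -surjective_pairing in_take // ltnS -nth_k index_nth.
  have w_e1_take : (w, e.1) \in take k.+1 es.
    by apply: take_lt; rewrite ?mem_sorted_edges /= ?lt_w ?w_e1.
  have w_e2_take : (w, e.2) \in take k.+1 es.
    by apply: take_lt; rewrite ?mem_sorted_edges /= ?lt_w2 ?w_e2.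
  apply/existsP; exists w.
  by rewrite !neq_ltn lt_w lt_w2 /in_sub w_e1_take w_e2_take !orbT.
Qed.

Lemma abs_phiE : abs_phi G =
  \sum_(a : 'I_n) \sum_(b : 'I_n) [&& a < b, adj G a b & low_apex G a b].
Proof.
rewrite /abs_phi /phi /mkseq count_map.
rewrite (eq_count (a2 := fun k => if onth es k is Some e then low_apex G e.1 e.2 else false));
  last by move=> k /=; case E: (onth es k) => //; apply: in_triangle_sorted_edges.
rewrite count_onth (seq.permP (permEl (perm_sort _ _))) count_filter -sum1_count.
rewrite big_mkcond big_allpairs big_enum; apply: eq_bigr => a _.
rewrite big_enum; apply: eq_bigr => b _.
by rewrite /= andbC -andbA; case: [&& _, _ & _].
Qed.

End ConfigurationOrder.

Definition min_in n (s : 'S_n) (S A : {set 'I_n}) : bool :=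
  [exists a in A, [forall u in S, s a <= s u]].

Lemma perm_val_eq n (s : 'S_n) u v : (nat_of_ord (s u) == s v) = (u == v).
Proof. by rewrite val_eqE (inj_eq perm_inj). Qed.

Section UniformMinimum.
Variables (n : nat) (S : {set 'I_n}) (x0 : 'I_n).
Hypothesis x0S : x0 \in S.

Let first (s : 'S_n) : 'I_n := [arg min_(u < x0 in S) nat_of_ord (s u)].

Lemma firstP (s : 'S_n) : first s \in S /\ forall u, u \in S -> s (first s) <= s u.
Proof. by rewrite /first; case: arg_minnP. Qed.

Lemma first_unique (s : 'S_n) v : v \in S -> (forall u, u \in S -> s v <= s u) -> first s = v.
Proof.
move=> vS v_min; have [fS f_min] := firstP s.
by apply/eqP; rewrite -(perm_val_eq s) eqn_leq f_min // v_min.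
Qed.

Lemma first_tperm (s : 'S_n) v v' : v \in S -> v' \in S ->
  first (tperm v v' * s)%g = tperm v v' (first s).
Proof.
move=> vS v'S; have [fS f_min] := firstP s.
have tS u : u \in S -> tperm v v' u \in S by case: tpermP => // ->.
apply: first_unique => [|u uS]; first exact: tS fS.
by rewrite !permM tpermK f_min ?tS.
Qed.

Lemma card_first v : v \in S -> #|S| * \sum_(s : 'S_n) (first s == v) = n`!.
Proof.
have first_x0 v' : v' \in S -> \sum_(s : 'S_n) (first s == v') = \sum_(s : 'S_n) (first s == x0).
  move=> v'S; rewrite (reindex_inj (mulgI (tperm x0 v'))) /=.
  apply: eq_bigr => s _; rewrite first_tperm //.
  by rewrite (canF_eq (tpermK x0 v')) tpermR.
move=> vS; rewrite first_x0 // -sum_nat_const.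
under eq_bigr => v' v'S do rewrite -(first_x0 v' v'S).
rewrite exchange_big /= -[RHS]card_Sn -sum1_card.
apply: eq_bigr => s _; have [fS _] := firstP s.
by rewrite (bigD1 (first s)) //= eqxx big1 // => u /andP[_]; rewrite eq_sym => /negbTE->.
Qed.

Lemma min_in_first (s : 'S_n) (A : {set 'I_n}) : A \subset S -> min_in s S A = (first s \in A).
Proof.
move=> sAS; have [_ f_min] := firstP s.
apply/idP/idP => [/exists_inP[a aA /forall_inP a_min]|fA].
  by rewrite (first_unique (subsetP sAS a aA) a_min).
by apply/exists_inP; exists (first s) => //; apply/forall_inP.
Qed.

Lemma sum_min_in (A : {set 'I_n}) : A \subset S ->
  #|S| * \sum_(s : 'S_n) min_in s S A = #|A| * n`!.
Proof.
move=> sAS; under eq_bigr do rewrite (min_in_first _ sAS).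
have first_in s : (first s \in A : nat) = \sum_(v in A) (first s == v).
  rewrite big_mkcond (bigD1 (first s)) //= eqxx big1 => [|v /negbTE ne]; last first.
    by rewrite eq_sym ne if_same.
  by rewrite addn0; case: (_ \in A).
under eq_bigr do rewrite first_in.
rewrite exchange_big big_distrr /= -sum_nat_const.
by apply: eq_bigr => v vA; rewrite card_first // (subsetP sAS).
Qed.

End UniformMinimum.

Lemma min_in_pair n (s : 'S_n) x y (C : {set 'I_n}) : x \notin C -> s x < s y ->
  min_in s (x |: (y |: C)) C = [exists z in C, s z < s x].
Proof.
move=> xC lt_xy; apply/idP/idP.
  case/exists_inP=> a aC /forall_inP a_min; apply/exists_inP; exists a => //.
  rewrite ltn_neqAle perm_val_eq a_min ?setU11 // andbT.
  by apply: contraNneq xC => <-.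
case/exists_inP=> z zC lt_zx; case: (arg_minnP (fun a => nat_of_ord (s a)) zC).
move=> a aC a_min; apply/exists_inP; exists a => //; apply/forall_inP => u.
have lt_ax := leq_ltn_trans (a_min z zC) lt_zx.
rewrite !inE => /or3P[/eqP->|/eqP->|/a_min //]; first exact: ltnW.
exact: ltnW (ltn_trans lt_ax lt_xy).
Qed.

Lemma min_in_ordered_pair n (s : 'S_n) x y (C : {set 'I_n}) :
  x != y -> x \notin C -> y \notin C ->
  ((s x < s y) && [exists z in C, s z < s x]) + ((s y < s x) && [exists z in C, s z < s y])
  = min_in s (x |: (y |: C)) C.
Proof.
move=> ne_xy xC yC; case: (ltngtP (s x) (s y)) => [lt_xy|lt_yx|/val_inj/perm_inj eq_xy].
- by rewrite min_in_pair // addn0.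
- by rewrite setUCA min_in_pair.
- by rewrite eq_xy eqxx in ne_xy.
Qed.

Section OrderedTriples.
Variable T : finType.

Definition ordered_in (t : {set T}) (x y z : T) : bool :=
  [&& x \in t, y \in t :\ x & z \in t :\ x :\ y].

Lemma sum_ordered_pairs (A : {set T}) :
  \sum_(y : T) \sum_(z : T) ((y \in A) && (z \in A :\ y)) = #|A| ^_ 2.
Proof.
rewrite (eq_bigr (fun y => (y \in A) * #|A|.-1)) => [|y _].
  by rewrite -big_distrl sum_mem_card ffactnS ffactn1.
case: (boolP (y \in A)) => [yA|_]; last by rewrite mul0n big1.
by rewrite /= mul1n sum_mem_card (cardsD1 y A) yA.
Qed.

Lemma sum_ordered_in (t : {set T}) :
  \sum_(x : T) \sum_(y : T) \sum_(z : T) ordered_in t x y z = #|t| ^_ 3.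
Proof.
rewrite (eq_bigr (fun x => (x \in t) * #|t|.-1 ^_ 2)) => [|x _].
  by rewrite -big_distrl sum_mem_card.
case: (boolP (x \in t)) => [xt|xt]; last first.
  by rewrite mul0n big1 // => y _; rewrite big1 // => z _; rewrite /ordered_in (negbTE xt).
have -> : #|t|.-1 = #|t :\ x| by rewrite (cardsD1 x t) xt.
by rewrite mul1n -sum_ordered_pairs /ordered_in xt.
Qed.

Lemma ordered_in_card3 (t : {set T}) x y z :
  #|t| = 3 -> ordered_in t x y z -> t = [set x; y; z].
Proof.
move=> card_t /and3P[xt]; rewrite !in_setD1 => /andP[ne_yx yt] /and3P[ne_zy ne_zx zt].
apply/eqP; rewrite eq_sym eqEcard card_t; apply/andP; split.
  by apply/subsetP => u; rewrite !inE -orbA => /or3P[] /eqP->.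
by rewrite setUC cardsU1 cards2 !inE negb_or ne_zx ne_zy eq_sym ne_yx.
Qed.

End OrderedTriples.

Definition common_nbrs n d (G : port_graph n d) (x y : 'I_n) : {set 'I_n} :=
  [set z | adj G z x && adj G z y].

Definition phi_pair n d (G : port_graph n d) (s : 'S_n) (x y : 'I_n) : bool :=
  [&& s x < s y, adj G x y & [exists z in common_nbrs G x y, s z < s x]].

Lemma common_nbrsC n d (G : port_graph n d) x y : common_nbrs G x y = common_nbrs G y x.
Proof. by apply/setP => z; rewrite !inE andbC. Qed.

Lemma adj_perm_graph n d (G : port_graph n d) (s : 'S_n) x y :
  adj (perm_graph G s) (s x) (s y) = adj G x y.
Proof. by apply: eq_existsb => k; rewrite /perm_graph permK (inj_eq perm_inj). Qed.

Section TriangleCount.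
Variables (n d : nat) (G : port_graph n d).

Definition is_triangle (t : {set 'I_n}) : bool :=
  (#|t| == 3) && [forall u in t, forall v in t, (u != v) ==> adj G u v].

Lemma num_trianglesE : num_triangles G = \sum_(t : {set 'I_n}) is_triangle t.
Proof. by rewrite /num_triangles -sum_mem_card; apply: eq_bigr => t _; rewrite inE. Qed.

Lemma sum_triangle_ordered_in x y z :
  \sum_(t : {set 'I_n}) (is_triangle t && ordered_in t x y z)
  <= adj G x y && (z \in common_nbrs G x y).
Proof.
have tri_xyz t : is_triangle t && ordered_in t x y z ->
    (t == [set x; y; z]) && adj G x y && (z \in common_nbrs G x y).
  case/andP=> /andP[/eqP card_t /forall_inP t_clique] t_xyz.
  have adj_t u v : u \in t -> v \in t -> u != v -> adj G u v.
    by move=> ut vt; move/forall_inP: (t_clique u ut) => /(_ v vt) /implyP.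
  move: (t_xyz) => /and3P[xt]; rewrite !in_setD1 => /andP[ne_yx yt] /and3P[ne_zy ne_zx zt].
  by rewrite (ordered_in_card3 card_t t_xyz) eqxx inE !adj_t // eq_sym.
case: (boolP (adj G x y && _)) => [_|not_tri].
  apply: (@leq_trans (\sum_(t | t == [set x; y; z]) 1)); last by rewrite big_pred1_eq.
  rewrite [leqRHS]big_mkcond; apply: leq_sum => t _.
  case: (boolP (_ && _)) => // /tri_xyz.
  by rewrite -andbA => /andP[->].
rewrite leqn0 sum_nat_eq0; apply/forallP => t; apply/implyP => _.
by rewrite eqb0; apply: contraNN not_tri => /tri_xyz; rewrite -andbA => /andP[_].
Qed.

Lemma triangles_le_sum_common_nbrs :
  6 * num_triangles G <= \sum_(x : 'I_n) \sum_(y : 'I_n) adj G x y * #|common_nbrs G x y|.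
Proof.
have six_orders t : is_triangle t * 6 =
    \sum_(x : 'I_n) \sum_(y : 'I_n) \sum_(z : 'I_n) (is_triangle t && ordered_in t x y z).
  case: (boolP (is_triangle t)) => [tri_t|_]; last first.
    by rewrite mul0n big1 // => x _; rewrite big1 // => y _; rewrite big1.
  by rewrite sum_ordered_in; case/andP: tri_t => /eqP->.
rewrite num_trianglesE mulnC big_distrl (eq_bigr _ (fun t _ => six_orders t)) /=.
rewrite exchange_big; apply: leq_sum => x _; rewrite exchange_big; apply: leq_sum => y _.
rewrite exchange_big (@leq_trans (\sum_z (adj G x y && (z \in common_nbrs G x y)))) //.
  by apply: leq_sum => z _; apply: sum_triangle_ordered_in.
by case: (adj G x y); rewrite /= ?mul1n ?sum_mem_card // mul0n big1.
Qed.

End TriangleCount.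

Section LabeledRegular.
Variables (n d : nat) (G : port_graph n d).
Hypothesis G_reg : labeled_regular G.

Lemma adjC u v : adj G u v = adj G v u.
Proof. by case: G_reg. Qed.

Lemma adj_irr u : adj G u u = false.
Proof.
by case: G_reg => _ G_loopless _; apply/existsP => -[k]; rewrite (negbTE (G_loopless u k)).
Qed.

Lemma adj_neq u v : adj G u v -> u != v.
Proof. by apply: contraTneq => ->; rewrite adj_irr. Qed.

Lemma notin_common_nbrs x y : (x \notin common_nbrs G x y) && (y \notin common_nbrs G x y).
Proof. by rewrite !inE !adj_irr andbF. Qed.

Lemma card_common_nbrs x y : adj G x y -> #|common_nbrs G x y| < d.
Proof.
move=> adj_xy; case: G_reg => G_inj _ _.
set N := [set G x k | k : 'I_d].
have y_N : y \in N by case/existsP: adj_xy => k /eqP <-; apply: imset_f.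
have sub_N : common_nbrs G x y \subset N :\ y.
  apply/subsetP => z; rewrite !inE => /andP[adj_zx adj_zy].
  rewrite (adj_neq adj_zy) /=; rewrite adjC in adj_zx.
  by case/existsP: adj_zx => k /eqP <-; apply: imset_f.
suff : #|common_nbrs G x y| < #|N| by rewrite card_imset ?card_ord.
by rewrite (cardsD1 y N) y_N ltnS subset_leq_card.
Qed.

Lemma abs_phi_perm_graph (s : 'S_n) :
  abs_phi (perm_graph G s) = \sum_(x : 'I_n) \sum_(y : 'I_n) phi_pair G s x y.
Proof.
have adjC_s u v : adj (perm_graph G s) u v = adj (perm_graph G s) v u.
  by rewrite -(permKV s u) -(permKV s v) !adj_perm_graph adjC.
rewrite (abs_phiE adjC_s) (reindex_inj (@perm_inj _ s)); apply: eq_bigr => x _.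
rewrite (reindex_inj (@perm_inj _ s)); apply: eq_bigr => y _.
rewrite /phi_pair /low_apex adj_perm_graph; congr (nat_of_bool (_ && (_ && _))).
apply/existsP/exists_inP => [[w]|[z]].
  rewrite -(permKV s w) !adj_perm_graph -andbA => /andP[lt_w adj_w].
  by exists (s^-1 w)%g; rewrite ?inE.
by rewrite inE => /andP[adj_zx adj_zy] lt_z; exists (s z); rewrite !adj_perm_graph lt_z adj_zx.
Qed.

Lemma phi_pair_add (s : 'S_n) x y :
  phi_pair G s x y + phi_pair G s y x =
  adj G x y * min_in s (x |: (y |: common_nbrs G x y)) (common_nbrs G x y).
Proof.
case adj_xy: (adj G x y); last by rewrite /phi_pair [adj G y x]adjC adj_xy !andbF.
have /andP[xC yC] := notin_common_nbrs x y.
rewrite mul1n -min_in_ordered_pair ?adj_neq // /phi_pair [adj G y x]adjC adj_xy.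
by rewrite [common_nbrs G y x]common_nbrsC.
Qed.

Lemma double_abs_phi_perm_graph (s : 'S_n) : 2 * abs_phi (perm_graph G s) =
  \sum_(x : 'I_n) \sum_(y : 'I_n)
    adj G x y * min_in s (x |: (y |: common_nbrs G x y)) (common_nbrs G x y).
Proof.
rewrite abs_phi_perm_graph mul2n -addnn {2}exchange_big -big_split /=.
by apply: eq_bigr => x _; rewrite -big_split; apply: eq_bigr => y _; apply: phi_pair_add.
Qed.

Lemma sum_min_in_common_nbrs x y : adj G x y ->
  #|common_nbrs G x y| * n`! <=
  (d + 1) * \sum_(s : 'S_n) min_in s (x |: (y |: common_nbrs G x y)) (common_nbrs G x y).
Proof.
move=> adj_xy; have /andP[xC yC] := notin_common_nbrs x y.
have sub_C := subset_trans (subsetU1 y _) (subsetU1 x _).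
rewrite -(sum_min_in (setU11 _ _) (sub_C _)) leq_mul // !cardsU1.
by rewrite in_setU1 negb_or (adj_neq adj_xy) xC yC !add1n addn1 ltnS card_common_nbrs.
Qed.

Lemma triangles_le_sum_abs_phi :
  3 * num_triangles G * n`! <= (d + 1) * \sum_(s : 'S_n) abs_phi (perm_graph G s).
Proof.
rewrite -(leq_pmul2l (isT : 0 < 2)) mulnA mulnA -[2 * 3]/6 mulnCA big_distrr /=.
under eq_bigr do rewrite double_abs_phi_perm_graph //.
rewrite (leq_trans (leq_mul (triangles_le_sum_common_nbrs G) (leqnn n`!))) //.
rewrite [X in _ <= _ * X]exchange_big big_distrl big_distrr; apply: leq_sum => x _ /=.
rewrite [X in _ <= _ * X]exchange_big big_distrl big_distrr; apply: leq_sum => y _ /=.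
case: (boolP (adj G x y)) => [adj_xy|_]; last by rewrite !mul0n.
under eq_bigr do rewrite mul1n.
by rewrite mul1n sum_min_in_common_nbrs.
Qed.

End LabeledRegular.

Lemma bin2_mul2 d : 'C(d, 2) * 2 = d * d.-1.
Proof. by rewrite -[2]/(2`!) bin_ffact ffactnS ffactn1. Qed.

Unset Implicit Arguments.

Theorem lemma3 (R : realType) (c : R) (n d : nat) (G : port_graph n d) :
  (0 < c < 1)%R ->
  ~~ odd (d * n) ->
  labeled_regular G ->
  ((num_triangles G)%:R >= c * ('C(d, 2)%:R * n%:R / 3%:R))%R ->
  ((\sum_(s : 'S_n) (abs_phi (perm_graph G s))%:R) / (n`!)%:R
    >= c * ((d * n)%:R / 2%:R) * ((d%:R - 1) / (d%:R + 1)))%R.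
Proof.
move=> _ _ G_reg triangles_ge.
have := triangles_le_sum_abs_phi G_reg; rewrite -(ler_nat R) !natrM natrD -natr_sum.
set T := num_triangles G; set X := (\sum_s _)%N => nat_bound.
have factR_gt0 : (0 < (n`!)%:R :> R)%R by rewrite ltr0n fact_gt0.
have dR1_gt0 : (0 < d%:R + 1 :> R)%R by rewrite ltr_wpDl.
have bin2R : ('C(d, 2)%:R = d%:R * (d%:R - 1) / 2 :> R)%R.
  apply: (canRL (mulfK _)); rewrite ?pnatr_eq0 // -natrM bin2_mul2 natrM.
  by case: (d) => [|d']; rewrite ?mul0r // -natr1 addrK.
have -> : (c * (d%:R * n%:R / 2) * ((d%:R - 1) / (d%:R + 1))
    = 3 * (c * ('C(d, 2)%:R * n%:R / 3%:R)) / (d%:R + 1) :> R)%R.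
  by rewrite bin2R; field; rewrite gt_eqF.
apply: (@le_trans _ _ (3 * T%:R / (d%:R + 1))%R).
  by rewrite ler_pM2r ?invr_gt0 // ler_pM2l ?ltr0n.
by rewrite ler_pdivrMr // mulrAC ler_pdivlMr // [(X%:R * _)%R]mulrC.
Qed.
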